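(* Let a loop-tangle diagram be minimal, i.e. the disc bounded by its loop contains no $1$-sided and no $2$-sided faces. Then inside the disc there is at least one of the following: a triangular face one of whose sides is a connected subarc of the loop; two triangular faces sharing a side; a quadrilateral face sharing at least one side with a triangular face; or a pentagonal face sharing at least four of its sides with triangular faces.
   Context: In an oriented knot diagram, a loop is a subarc $\gamma^\dagger$ of the knot such that (1) $\gamma^\dagger$ has exactly one self-crossing $u$, forming a loop bounding a disc $R$; (2) apart from $u$, at every crossing $\gamma^\dagger$ meets, $\gamma^\dagger$ is the under-strand (or at every such crossing it is the over-strand); (3) the two edges incident to $u$ not on the loop lie outside $R$. The tangle consists of the arcs of the knot inside $R$, each crossing the loop at its two endpoints; loop plus tangle is the loop-tangle diagram. Its faces are the faces inside $R$ of the planar $4$-valent graph formed by the loop and tangle (vertices: $u$, crossings of the tangle with the loop, and crossings of the tangle inside $R$); an $N$-sided face (triangle for $N=3$, quadrilateral for $N=4$, pentagon for $N=5$) is one bounded by $N$ edges. *)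

From mathcomp Require Import all_boot.
Set Implicit Arguments. Unset Strict Implicit. Unset Printing Implicit Defensive.

Section LoopTangle.
Variable D : finType.          (* darts (half-edges) of the loop-tangle diagram *)
Variables (node edge : D -> D). (* node: rotation around a vertex; edge: other half of the edge *)

Definition face (x : D) : D := node (edge x).

Definition nV := fcard node predT.
Definition nE := fcard edge predT.
Definition nF := fcard face predT.

(* a connected planar (genus 0) combinatorial map *)
Definition planar_map : Prop :=
  [/\ injective node,
      (forall x, edge (edge x) = x),
      (forall x, edge x != x),
      (forall x y, connect [rel a b | (b == node a) || (b == edge a)] x y) &
      nV + nF = nE + 2].

(* o is a dart of the face lying outside the disc R bounded by the loop *)
Definition on_loop_face (o x : D) : bool := fconnect face o x.
Definition inner (o x : D) : bool := ~~ fconnect face o x.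
Definition boundary_vertex (o v : D) : Prop :=
  exists2 y, on_loop_face o y & fconnect node y v.
(* strand continuation: straight through a 4-valent crossing *)
Definition strand_step (x : D) : D := node (node (edge x)).

(* A loop-tangle diagram (its underlying planar 4-valent picture restricted to
   the closed disc R).  The loop is the boundary of the outer face o; on the
   loop there is the vertex u (degree 2 inside R) and crossings of the tangle
   with the loop (degree 3 inside R); interior vertices are crossings of the
   tangle (degree 4); every tangle strand, followed straight through
   crossings, reaches the loop (no closed curves inside R). *)
Definition loop_tangle (o : D) : Prop :=
  planar_map /\ [/\
      (* the loop is a simple closed curve: outer face visits each vertex once *)
      (forall x y, on_loop_face o x -> on_loop_face o y -> fconnect node x y -> x = y),
      (forall x, on_loop_face o x -> inner o (edge x)),
      (exists u, [/\ on_loop_face o u, order node u = 2 &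
         (forall x, on_loop_face o x -> ~~ fconnect node u x -> order node x = 3)]),
      (forall v, ~ boundary_vertex o v -> order node v = 4) &
      (forall x, exists k, boundary_vertex o (edge (iter k strand_step x)))].

Definition minimal_lt (o : D) : Prop :=
  forall x, inner o x -> order face x <> 1 /\ order face x <> 2.

Definition inner_triangle (o x : D) : bool := inner o x && (order face x == 3).

End LoopTangle.

From Pilot Require Import Defs.
From mathcomp Require Import all_boot zify.
From Stdlib Require Import Classical.
Set Implicit Arguments. Unset Strict Implicit. Unset Printing Implicit Defensive.

(* Discharging.  Euler's formula for the map of the disc R reads
   sum_v (deg v - 4) + sum_f (len f - 4) = -8.  Let the outer face give one unit
   to each of its corners: it keeps -4, interior vertices have charge 0, loop
   vertices charge >= 0 and the degree-2 vertex u charge >= -1.  Hence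
   sum (4 - len f) >= 3 over the inner faces.  Multiply by 3 and let every inner
   triangle send one unit across each of its sides.  If none of the four
   configurations occurs, minimality leaves no inner face with fewer than three
   sides, triangles and quadrilaterals receive nothing, a pentagon receives at
   most 3 and a k-gon (k >= 6) at most k, so every inner face ends with a
   nonpositive charge although the total is at least 9. *)

Lemma sum_bool_card (T : finType) (A : {pred T}) (b : pred T) :
  \sum_(x in A) b x = #|[predI A & b]|.
Proof.
rewrite -sum1_card big_mkcondr; apply: eq_bigr => x _.
by rewrite -[x \in b]/(b x); case: (b x).
Qed.

Section Orbits.
Variables (T : finType) (f : T -> T).
Hypothesis f_inj : injective f.

Let fsym := fconnect_sym f_inj.

Lemma order_fconnect x y : fconnect f x y -> order f x = order f y.
Proof. by move=> xy; apply: eq_card => z; rewrite !inE (same_connect fsym xy). Qed.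

Lemma fixpoint_order_le1 x : f x = x -> order f x <= 1.
Proof. by move=> fx; apply: (@order_le_cycle _ _ [:: x]); rewrite ?inE //= fx eqxx. Qed.

Lemma order_involutive x : involutive f -> f x != x -> order f x = 2.
Proof.
move=> fK fx; apply: (@order_cycle _ f [:: x; f x]) => /=; last exact: mem_head.
  by rewrite fK !eqxx.
by rewrite inE eq_sym fx.
Qed.

Lemma big_orbits (R : Type) (idx : R) (op : Monoid.com_law idx)
    (a : {pred T}) (F : T -> R) : fclosed f a ->
  \big[op/idx]_(x in a) F x =
    \big[op/idx]_(r in [predI froots f & a]) \big[op/idx]_(x in fconnect f r) F x.
Proof.
move=> cl_a.
rewrite (partition_big (froot f) [predI froots f & a]) => [|x ax]; last first.
  by rewrite !inE (roots_root fsym) -(closed_connect cl_a (connect_root _ x)).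
apply: eq_bigr => r /andP[/eqP rootr ar]; apply: eq_bigl => x.
rewrite -{1}rootr (root_connect fsym) -fsym.
by apply: andb_idl => /(closed_connect cl_a) <-.
Qed.

End Orbits.

Section LoopTangle.
Variables (D : finType) (node edge : D -> D) (o u : D).
Local Notation face := (face node edge).
Local Notation out := (on_loop_face node edge o).
Local Notation inner := (inner node edge o).
Local Notation triangle := (inner_triangle node edge o).

Hypothesis node_inj : injective node.
Hypothesis edgeK : involutive edge.
Hypothesis edge_neq : forall x, edge x != x.
Hypothesis euler : nV node + nF node edge = nE edge + 2.
Hypothesis u_out : out u.
Hypothesis u_degree : order node u = 2.
Hypothesis loop_degree : forall x, out x -> ~~ fconnect node u x -> order node x = 3.
Hypothesis inner_degree : forall v, ~ boundary_vertex node edge o v -> order node v = 4.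
Hypothesis minimal : minimal_lt node edge o.

Let edge_inj : injective edge := inv_inj edgeK.
Let face_inj : injective face.
Proof. by move=> x y /node_inj /edge_inj. Qed.

Lemma inner_fconnect x y : fconnect face x y -> inner x = inner y.
Proof. by move=> xy; rewrite /Defs.inner (same_connect_r (fconnect_sym face_inj) xy). Qed.

Lemma fclosed_inner : fclosed face inner.
Proof. by move=> x _ /eqP <-; apply: inner_fconnect (fconnect1 _ _). Qed.

Lemma loop_vertex_degree y r : out y -> fconnect node y r ->
  order node r = if fconnect node u r then 2 else 3.
Proof.
move=> y_out yr; have [ur | not_ur] := ifPn.
  by rewrite -(order_fconnect node_inj ur).
rewrite -(order_fconnect node_inj yr) loop_degree //.
by apply: contra not_ur => uy; apply: connect_trans uy yr.
Qed.

Lemma vertex_degree_ge2 x : 2 <= order node x.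
Proof.
have [[y y_out yx] | interior] := classic (boundary_vertex node edge o x).
  by rewrite (loop_vertex_degree y_out yx); case: ifP.
by rewrite inner_degree.
Qed.

Lemma node_moves x : node x != x.
Proof.
apply: contraTneq (vertex_degree_ge2 x) => /fixpoint_order_le1.
by rewrite -leqNgt.
Qed.

(* The term [x == u] pays for the deficit of the vertex of u, at a total cost of one. *)
Lemma vertex_charge r :
  4 <= \sum_(x in fconnect node r) (1 + out x + (x == u)).
Proof.
rewrite !big_split /= sum1_card -/(order node r).
have [[y y_out yr] | interior] := classic (boundary_vertex node edge o r); last first.
  by rewrite inner_degree.
have ry : y \in fconnect node r by rewrite inE fconnect_sym.
have out_r : 1 <= \sum_(x in fconnect node r) out x by rewrite (bigD1 y) //= y_out.
rewrite (loop_vertex_degree y_out yr); case: ifPn => [ur | _].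
  have ru : u \in fconnect node r by rewrite inE fconnect_sym.
  have u_r : 1 <= \sum_(x in fconnect node r) (x == u) by rewrite (bigD1 u) //= eqxx.
  exact: leq_add (leq_add (leqnn 2) out_r) u_r.
exact: leq_trans (leq_add (leqnn 3) out_r) (leq_addr _ _).
Qed.

Lemma card_darts : #|D| = 2 * nE edge.
Proof.
rewrite mulnC -(@fcard_order_set _ _ edge_inj 2 predT) //.
by apply/subsetP => x _; rewrite inE order_involutive.
Qed.

Lemma four_nV_le : 4 * nV node <= #|D| + #|out| + 1.
Proof.
have weights : \sum_(x in predT) (1 + out x + (x == u)) = #|D| + #|out| + 1.
  rewrite !big_split /= sum1_card !sum_bool_card.
  by congr (_ + _ + _); rewrite -(card1 u); apply: eq_card.
rewrite -weights (big_orbits node_inj) // mulnC -sum_nat_const.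
by apply: leq_sum => r _; apply: vertex_charge.
Qed.

Lemma nF_inner : nF node edge = 1 + fcard face inner.
Proof.
rewrite /nF (n_compC out) (n_comp_connect (fconnect_sym face_inj)).
by congr (_ + _); apply: eq_n_comp_r.
Qed.

Lemma inner_face_deficit : #|inner| + 3 <= 4 * fcard face inner.
Proof.
have darts_split : #|out| + #|inner| = #|D|.
  by rewrite -(cardC out); congr (_ + _); apply: eq_card.
have := four_nV_le; have := card_darts; have := nF_inner; lia.
Qed.

Lemma triangle_edge_other_face y : order face y = 3 -> ~~ fconnect face y (edge y).
Proof.
move=> y3; rewrite fconnect_orbit /orbit y3 !inE.
have face3 : face (face (face y)) = y by have := iter_order face_inj y; rewrite y3.
apply/or3P => -[] /eqP y_edge.
- by have := edge_neq y; rewrite y_edge eqxx.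
- by have := node_moves (edge y); rewrite -[node _]/(face y) -y_edge eqxx.
- have := node_moves y; rewrite -{1}[y]edgeK y_edge.
  by rewrite -[node _]/(face (face (face y))) face3 eqxx.
Qed.

Definition triangle_sides x := #|[set y | fconnect face x y && triangle (edge y)]|.

Lemma triangle_sidesE x :
  triangle_sides x = \sum_(y in fconnect face x) triangle (edge y).
Proof. by rewrite sum_bool_card; apply: eq_card => y; rewrite !inE. Qed.

Local Notation inner_faces := [predI froots face & inner].

Lemma sum_triangle_faces :
  \sum_(r in inner_faces) 3 * (order face r == 3) = #|triangle|.
Proof.
have -> : #|triangle| = \sum_(x in inner) triangle x.
  by rewrite sum_bool_card; apply: eq_card => x; rewrite !inE -!topredE /= andbA andbb.
rewrite (big_orbits face_inj _ _ fclosed_inner); apply: eq_bigr => r /andP[_ r_inner].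
rewrite (eq_bigr (fun=> nat_of_bool (order face r == 3))) => [|x rx]; last first.
  rewrite /inner_triangle -(inner_fconnect rx) (r_inner : inner r).
  by rewrite (order_fconnect face_inj rx).
by rewrite sum_nat_const -/(order face r); case: eqP => [->|_]; rewrite ?muln0.
Qed.

Section Discharging.
Hypothesis no_loop_triangle : ~ exists x, triangle x /\ out (edge x).
Hypothesis no_triangle_pair :
  ~ exists x, [/\ triangle x, triangle (edge x) & ~~ fconnect face x (edge x)].
Hypothesis no_quadrilateral_triangle :
  ~ exists x, [/\ inner x, order face x = 4 & triangle (edge x)].
Hypothesis no_pentagon_4triangles :
  ~ exists x, [/\ inner x, order face x = 5 & 4 <= triangle_sides x].

Lemma triangle_sides_small x :
  inner x -> order face x <= 4 -> triangle_sides x = 0.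
Proof.
move=> x_inner x_small; apply/eqP; rewrite cards_eq0 -subset0; apply/subsetP => y.
rewrite inE => /andP[xy edge_triangle].
have y_inner : inner y by rewrite -(inner_fconnect xy).
have [not1 not2] := minimal y_inner.
have y_pos := order_gt0 face y; rewrite (order_fconnect face_inj xy) in x_small.
have [y3 | y_not3] := eqVneq (order face y) 3.
  case: no_triangle_pair; exists y; split => //.
    by rewrite /inner_triangle y_inner y3.
  exact: triangle_edge_other_face.
case: no_quadrilateral_triangle; exists y; split => //; lia.
Qed.

Lemma face_discharge x : inner x ->
  12 + triangle_sides x <= 3 * order face x + 3 * (order face x == 3).
Proof.
move=> x_inner; have [not1 not2] := minimal x_inner; have := order_gt0 face x.
have sides_le : triangle_sides x <= order face x.
  by apply: subset_leq_card; apply/subsetP => y; rewrite inE => /andP[].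
have [x_small | x_large] := leqP (order face x) 4.
  by rewrite triangle_sides_small //; case: eqP; lia.
have [x5 | x_not5] := eqVneq (order face x) 5.
  have : triangle_sides x <= 3.
    by rewrite leqNgt; apply/negP => sides4; apply: no_pentagon_4triangles; exists x.
  by rewrite x5; lia.
by case: eqP; lia.
Qed.

Lemma sum_triangle_sides : \sum_(r in inner_faces) triangle_sides r = #|triangle|.
Proof.
under eq_bigr do rewrite triangle_sidesE.
rewrite -(big_orbits face_inj _ _ fclosed_inner).
have -> : \sum_(y in inner) triangle (edge y) = \sum_y triangle (edge y).
  rewrite [RHS](bigID inner) /= [X in _ = _ + X]big1 ?addn0 // => y y_out.
  case tri: (triangle (edge y)) => //; case: no_loop_triangle; exists (edge y).
  by rewrite edgeK; split => //; apply: negbNE.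
have -> : #|triangle| = \sum_y triangle y by rewrite sum_bool_card; apply: eq_card.
by rewrite [RHS](reindex_inj edge_inj).
Qed.

Lemma no_configuration_false : False.
Proof.
have inner_darts : #|inner| = \sum_(r in inner_faces) order face r.
  rewrite -sum1_card (big_orbits face_inj _ _ fclosed_inner).
  by apply: eq_bigr => r _; apply: sum1_card.
have discharge : \sum_(r in inner_faces) (12 + triangle_sides r)
    <= \sum_(r in inner_faces) (3 * order face r + 3 * (order face r == 3)).
  by apply: leq_sum => r /andP[_]; apply: face_discharge.
move: discharge; rewrite big_split [X in _ <= X]big_split.
rewrite sum_nat_const -big_distrr -inner_darts.
rewrite sum_triangle_sides sum_triangle_faces.
have -> : #|inner_faces| = fcard face inner by [].
have := inner_face_deficit; rewrite /=; lia.
Qed.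

End Discharging.

End LoopTangle.

Theorem proposition5p12 (D : finType) (node edge : D -> D) (o : D) :
  loop_tangle node edge o ->
  minimal_lt node edge o ->
  (* a triangle with a side on the loop *)
  (exists x, inner_triangle node edge o x /\ on_loop_face node edge o (edge x))
  \/
  (* two distinct triangles sharing a side *)
  (exists x, [/\ inner_triangle node edge o x, inner_triangle node edge o (edge x)
               & ~~ fconnect (face node edge) x (edge x)])
  \/
  (* a quadrilateral sharing a side with a triangle *)
  (exists x, [/\ inner node edge o x, order (face node edge) x = 4
               & inner_triangle node edge o (edge x)])
  \/
  (* a pentagon sharing at least four of its sides with triangles *)
  (exists x, [/\ inner node edge o x, order (face node edge) x = 5
               & 4 <= #|[set y | fconnect (face node edge) x y
                                  && inner_triangle node edge o (edge y)]|]).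
Proof.
move=> [[node_inj edgeK edge_neq _ euler] [_ _ u_vertex inner_degree _]] minimal.
have [u [u_out u_degree loop_degree]] := u_vertex.
apply: NNPP => /not_or_and[c1 /not_or_and[c2 /not_or_and[c3 c4]]].
exact: (no_configuration_false node_inj edgeK edge_neq euler u_out u_degree loop_degree
  inner_degree minimal c1 c2 c3 c4).
Qed.
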